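(* Let $(L,\le,\bot,\top)$ be a complete lattice and $(\&_i,\swarrow^i,\nwarrow_i)$, $i=1,\dots,n$, adjoint triples on $L$ with $x\,\&_i\,\top=\top\,\&_i\,x=x$ for all $x\in L$ and all $i$. Let $(A,B,R,\sigma)$ be a normalized context with concept lattice $\mathcal{M}$, let $\{K_\mu\}_{\mu\in\Lambda}$ be a decomposition of $\mathcal{M}$ into independent blocks, and let $A_\mu,B_\mu$ ($\mu\in\Lambda$) be the associated sets defined below. If $a\in A$, $b\in B$ and $R(a,b)\neq\bot$, then there exists $\mu\in\Lambda$ such that $a\in A_\mu$ and $b\in B_\mu$.
   Context: An adjoint triple on $L$ is a triple of maps $\&,\swarrow,\nwarrow\colon L\times L\to L$ with $x\le z\swarrow y\iff x\& y\le z\iff y\le z\nwarrow x$. A context is $(A,B,R,\sigma)$ with $A,B$ non-empty, $R\colon A\times B\to L$, $\sigma\colon A\times B\to\{1,\dots,n\}$; normalized means every $a\in A$ has $b_1,b_2$ with $R(a,b_1)\ne\bot$, $R(a,b_2)=\bot$, and every $b\in B$ has $a_1,a_2$ with $R(a_1,b)\ne\bot$, $R(a_2,b)=\bot$. For $g\colon B\to L$, $f\colon A\to L$: $g^\uparrow(a)=\inf_{b}R(a,b)\swarrow^{\sigma(a,b)}g(b)$, $f^\downarrow(b)=\inf_{a}R(a,b)\nwarrow_{\sigma(a,b)}f(a)$. $\mathcal{M}$ is the complete lattice of pairs $\langle g,f\rangle$ with $g^\uparrow=f$, $f^\downarrow=g$, ordered by $g_1\le g_2$ pointwise; top $\langle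 g_\top,f_\bot\rangle$, bottom $\langle g_\bot,f_\top\rangle$ ($g_\top,g_\bot,f_\top,f_\bot$ constant maps). $\phi_{a,x}\colon A\to L$ takes value $x$ at $a$ and $\bot$ elsewhere; $\phi_{b,y}\colon B\to L$ takes value $y$ at $b$ and $\bot$ elsewhere. For a bounded lattice $(M,\preceq,\bot,\top)$, a block is a sublattice $K\subsetneq M$ with $K\setminus\{\bot,\top\}\ne\varnothing$ and $(\{x\mid k\preceq x\}\cup\{x\mid x\preceq k\})\setminus\{\bot,\top\}\subseteq K$ for all $k\in K\setminus\{\bot,\top\}$; blocks $K_1,K_2$ are independent if $K_1\cap K_2\subseteq\{\bot,\top\}$; a decomposition into independent blocks is a family of pairwise independent blocks whose union is $M$. With $K_\mu^*=K_\mu\setminus\{\langle g_\top,f_\bot\rangle,\langle g_\bot,f_\top\rangle\}$: $A_\mu=\{a\in A\mid\langle\phi_{a,x}^\downarrow,\phi_{a,x}^{\downarrow\uparrow}\rangle\in K_\mu^*\text{ for some }x\in L\}$ and $B_\mu=\{b\in B\mid\langle\phi_{b,y}^{\uparrow\downarrow},\phi_{b,y}^{\uparrow}\rangle\in K_\mu^*\text{ for some }y\in L\}$. *)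

From mathcomp Require Import all_boot.
From Stdlib Require Import ClassicalEpsilon.

Set Implicit Arguments.
Unset Strict Implicit.
Unset Printing Implicit Defensive.

Record complete_lattice (L : Type) := CompleteLattice {
  le : L -> L -> Prop;
  le_refl : forall x, le x x;
  le_trans : forall x y z, le x y -> le y z -> le x z;
  le_antisym : forall x y, le x y -> le y x -> x = y;
  inf : (L -> Prop) -> L;
  inf_lb : forall (S : L -> Prop) x, S x -> le (inf S) x;
  inf_glb : forall (S : L -> Prop) y, (forall x, S x -> le y x) -> le y (inf S)
}.

Section Concepts.
Variables (L : Type) (CL : complete_lattice L).

Definition bot : L := inf CL (fun _ => True).
Definition top : L := inf CL (fun _ => False).

(* (conj, sw, nw) = (&, ↙, ↖) with  x <= z ↙ y <-> x & y <= z <-> y <= z ↖ x *)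
Definition adjoint_triple (conj sw nw : L -> L -> L) : Prop :=
  forall x y z,
    (le CL x (sw z y) <-> le CL (conj x y) z) /\
    (le CL (conj x y) z <-> le CL y (nw z x)).

Variables (n : nat) (sw nw : 'I_n -> L -> L -> L).
Variables (A B : Type) (R : A -> B -> L) (sigma : A -> B -> 'I_n).

Definition normalized : Prop :=
  (forall a, (exists b1, R a b1 <> bot) /\ (exists b2, R a b2 = bot)) /\
  (forall b, (exists a1, R a1 b <> bot) /\ (exists a2, R a2 b = bot)).

Definition up (g : B -> L) : A -> L :=
  fun a => inf CL (fun z => exists b, z = sw (sigma a b) (R a b) (g b)).
Definition down (f : A -> L) : B -> L :=
  fun b => inf CL (fun z => exists a, z = nw (sigma a b) (R a b) (f a)).

Definition concept := ((B -> L) * (A -> L))%type.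

Definition is_concept (c : concept) : Prop := up c.1 = c.2 /\ down c.2 = c.1.

Definition leM (c1 c2 : concept) : Prop := forall b, le CL (c1.1 b) (c2.1 b).

Definition topM : concept := (fun _ => top, fun _ => bot).
Definition botM : concept := (fun _ => bot, fun _ => top).

Definition is_meetM (c1 c2 m : concept) : Prop :=
  is_concept m /\ leM m c1 /\ leM m c2 /\
  forall c, is_concept c -> leM c c1 -> leM c c2 -> leM c m.

Definition is_joinM (c1 c2 m : concept) : Prop :=
  is_concept m /\ leM c1 m /\ leM c2 m /\
  forall c, is_concept c -> leM c1 c -> leM c2 c -> leM m c.

Definition block (K : concept -> Prop) : Prop :=
  (forall c, K c -> is_concept c) /\
  (exists c, is_concept c /\ ~ K c) /\
  (forall c1 c2 m, K c1 -> K c2 -> is_meetM c1 c2 m -> K m) /\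
  (forall c1 c2 m, K c1 -> K c2 -> is_joinM c1 c2 m -> K m) /\
  (exists k, K k /\ k <> botM /\ k <> topM) /\
  (forall k x, K k -> k <> botM -> k <> topM ->
     is_concept x -> (leM k x \/ leM x k) -> x <> botM -> x <> topM -> K x).

Definition independent (K1 K2 : concept -> Prop) : Prop :=
  forall c, K1 c -> K2 c -> c = botM \/ c = topM.

Definition decomposition (Lam : Type) (K : Lam -> concept -> Prop) : Prop :=
  (forall mu, block (K mu)) /\
  (forall mu nu, mu <> nu -> independent (K mu) (K nu)) /\
  (forall c, is_concept c -> exists mu, K mu c).

Definition Kstar (K : concept -> Prop) (c : concept) : Prop :=
  K c /\ c <> topM /\ c <> botM.

Definition phiA (a : A) (x : L) : A -> L :=
  fun a' => if excluded_middle_informative (a' = a) then x else bot.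
Definition phiB (b : B) (y : L) : B -> L :=
  fun b' => if excluded_middle_informative (b' = b) then y else bot.

Definition A_mu (K : concept -> Prop) (a : A) : Prop :=
  exists x, Kstar K (down (phiA a x), up (down (phiA a x))).
Definition B_mu (K : concept -> Prop) (b : B) : Prop :=
  exists y, Kstar K (down (up (phiB b y)), up (phiB b y)).

End Concepts.

(** The object concept of [a] has intent [R(a, -)] and the attribute concept
    of [b] has extent [R(-, b)]; by normalization neither is the top or the
    bottom of the concept lattice.  When [R(a, b) <> bot], the concept
    generated by [phi_{b, R(a,b)}] lies below both of them and is itself
    nontrivial.  It belongs to some block, and since blocks contain every
    nontrivial concept comparable to one of their nontrivial elements, that
    block contains both the object concept of [a] and the attribute concept
    of [b]. *)

From Stdlib Require Import FunctionalExtensionality ClassicalEpsilon.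
From mathcomp Require Import all_boot.

Set Implicit Arguments.
Unset Strict Implicit.

Section CompleteLattice.
Variables (L : Type) (CL : complete_lattice L).
Local Notation "x ⊑ y" := (le CL x y) (at level 70).

Lemma le_inf y S : y ⊑ inf CL S <-> forall x, S x -> y ⊑ x.
Proof.
split=> [yS x Sx | ySx]; last exact: inf_glb.
exact: le_trans yS (inf_lb CL Sx).
Qed.

Lemma bot_le x : bot CL ⊑ x.
Proof. exact: inf_lb. Qed.

Lemma le_top x : x ⊑ top CL.
Proof. by apply: inf_glb. Qed.

Lemma le_bot_eq x : x ⊑ bot CL -> x = bot CL.
Proof. by move=> xb; apply: le_antisym xb (bot_le x). Qed.

Lemma top_neq_bot x : x <> bot CL -> top CL <> bot CL.
Proof. by move=> xb tb; apply: xb; apply: le_bot_eq; rewrite -tb; apply: le_top. Qed.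

End CompleteLattice.

Section AdjointTriple.
Variables (L : Type) (CL : complete_lattice L) (conj sw nw : L -> L -> L).
Hypothesis adj : adjoint_triple CL conj sw nw.

Lemma sw_bot z : sw z (bot CL) = top CL.
Proof.
apply: le_antisym (le_top _ _) _.
by apply/(proj1 (adj _ _ _))/(proj2 (adj _ _ _)); apply: bot_le.
Qed.

Lemma nw_bot z : nw z (bot CL) = top CL.
Proof.
apply: le_antisym (le_top _ _) _.
by apply/(proj2 (adj _ _ _))/(proj1 (adj _ _ _)); apply: bot_le.
Qed.

Lemma sw_top z : (forall x, conj x (top CL) = x) -> sw z (top CL) = z.
Proof.
move=> conj_top; apply: le_antisym.
- by rewrite -[sw z _]conj_top; apply/(proj1 (adj _ _ _))/le_refl.
- by apply/(proj1 (adj _ _ _)); rewrite conj_top; apply: le_refl.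
Qed.

Lemma nw_top z : (forall x, conj (top CL) x = x) -> nw z (top CL) = z.
Proof.
move=> conj_top; apply: le_antisym.
- by rewrite -[nw z _]conj_top; apply/(proj2 (adj _ _ _))/le_refl.
- by apply/(proj2 (adj _ _ _)); rewrite conj_top; apply: le_refl.
Qed.

End AdjointTriple.

Section ConceptLattice.
Variables (L : Type) (CL : complete_lattice L) (n : nat).
Variables (conj sw nw : 'I_n -> L -> L -> L).
Hypothesis adj : forall i, adjoint_triple CL (conj i) (sw i) (nw i).
Variables (A B : Type) (R : A -> B -> L) (sigma : A -> B -> 'I_n).

Local Notation "f ⊑* g" := (forall x, le CL (f x) (g x)) (at level 70).
Local Notation up := (up CL sw R sigma).
Local Notation down := (down CL nw R sigma).
Local Notation is_concept := (is_concept CL sw nw R sigma).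

Lemma le_down_iff_le_up (g : B -> L) (f : A -> L) : g ⊑* down f <-> f ⊑* up g.
Proof.
split=> [gf a | fg b].
- apply/le_inf=> _ [b ->]; apply/(proj1 (adj _ _ _ _))/(proj2 (adj _ _ _ _)).
  by apply: le_trans (gf b) _; apply: inf_lb; exists a.
- apply/le_inf=> _ [a ->]; apply/(proj2 (adj _ _ _ _))/(proj1 (adj _ _ _ _)).
  by apply: le_trans (fg a) _; apply: inf_lb; exists b.
Qed.

Lemma le_up_down (f : A -> L) : f ⊑* up (down f).
Proof. by apply/le_down_iff_le_up=> b; apply: le_refl. Qed.

Lemma le_down_up (g : B -> L) : g ⊑* down (up g).
Proof. by apply/le_down_iff_le_up=> a; apply: le_refl. Qed.

Lemma down_antitone (f1 f2 : A -> L) : f1 ⊑* f2 -> down f2 ⊑* down f1.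
Proof.
by move=> f12; apply/le_down_iff_le_up=> a; apply: le_trans (f12 a) (le_up_down _ a).
Qed.

Lemma up_antitone (g1 g2 : B -> L) : g1 ⊑* g2 -> up g2 ⊑* up g1.
Proof.
by move=> g12; apply/le_down_iff_le_up=> b; apply: le_trans (g12 b) (le_down_up _ b).
Qed.

Lemma down_up_down (f : A -> L) : down (up (down f)) = down f.
Proof.
apply: functional_extensionality=> b; apply: le_antisym (le_down_up _ b).
exact: down_antitone (le_up_down f) b.
Qed.

Lemma up_down_up (g : B -> L) : up (down (up g)) = up g.
Proof.
apply: functional_extensionality=> a; apply: le_antisym (le_up_down _ a).
exact: up_antitone (le_down_up g) a.
Qed.

Lemma down_up_least (g : B -> L) (f : A -> L) : g ⊑* down f -> down (up g) ⊑* down f.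
Proof. by move=> /le_down_iff_le_up; apply: down_antitone. Qed.

Definition conceptA (f : A -> L) : concept L A B := (down f, up (down f)).
Definition conceptB (g : B -> L) : concept L A B := (down (up g), up g).

Lemma is_concept_conceptA f : is_concept (conceptA f).
Proof. by split; last exact: down_up_down. Qed.

Lemma is_concept_conceptB g : is_concept (conceptB g).
Proof. by split; first exact: up_down_up. Qed.

Lemma conceptB_leM (g : B -> L) (c : concept L A B) :
  is_concept c -> g ⊑* c.1 -> leM CL (conceptB g) c.
Proof. by move=> [_ cE]; rewrite /leM -cE; apply: down_up_least. Qed.

Lemma down_phiA a x b : down (phiA CL a x) b = nw (sigma a b) (R a b) x.
Proof.
apply: le_antisym.
- apply: le_trans (inf_lb CL (ex_intro _ a erefl)) _; rewrite /phiA.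
  by case: excluded_middle_informative => /= [_ | /(_ erefl)]; first exact: le_refl.
- apply/le_inf=> _ [a' ->]; rewrite /phiA.
  case: excluded_middle_informative => /= [-> | _]; first exact: le_refl.
  by rewrite (nw_bot (adj _)); apply: le_top.
Qed.

Lemma up_phiB b y a : up (phiB CL b y) a = sw (sigma a b) (R a b) y.
Proof.
apply: le_antisym.
- apply: le_trans (inf_lb CL (ex_intro _ b erefl)) _; rewrite /phiB.
  by case: excluded_middle_informative => /= [_ | /(_ erefl)]; first exact: le_refl.
- apply/le_inf=> _ [b' ->]; rewrite /phiB.
  case: excluded_middle_informative => /= [-> | _]; first exact: le_refl.
  by rewrite (sw_bot (adj _)); apply: le_top.
Qed.

Lemma Kstar_leM (K : concept L A B -> Prop) (c c' : concept L A B) :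
  block CL sw nw R sigma K -> Kstar CL K c -> is_concept c' -> leM CL c c' ->
  c' <> topM CL A B -> c' <> botM CL A B -> Kstar CL K c'.
Proof.
move=> [_ [_ [_ [_ [_ closed]]]]] [Kc [ctop cbot]] cc' cle c'top c'bot.
by split; first exact: closed Kc cbot ctop cc' (or_introl cle) c'bot c'top.
Qed.

Hypothesis top_unit : forall i x, conj i x (top CL) = x /\ conj i (top CL) x = x.
Hypothesis norm : normalized CL R.

Lemma down_phiA_top a : down (phiA CL a (top CL)) = R a.
Proof.
apply: functional_extensionality=> b; rewrite down_phiA (nw_top (adj _)) //.
by move=> x; case: (top_unit (sigma a b) x).
Qed.

Lemma up_phiB_top b : up (phiB CL b (top CL)) = fun a => R a b.
Proof.
apply: functional_extensionality=> a; rewrite up_phiB (sw_top (adj _)) //.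
by move=> x; case: (top_unit (sigma a b) x).
Qed.

Lemma object_concept_nontrivial a :
  conceptA (phiA CL a (top CL)) <> topM CL A B /\
  conceptA (phiA CL a (top CL)) <> botM CL A B.
Proof.
have [[b1 Rab1] [b2 Rab2]] := norm.1 a.
rewrite /conceptA down_phiA_top; split=> [/(f_equal fst) | /(f_equal fst)] /= Ra.
- by apply: (top_neq_bot Rab1); rewrite -Rab2 Ra.
- by apply: Rab1; rewrite Ra.
Qed.

Lemma attribute_concept_nontrivial b :
  conceptB (phiB CL b (top CL)) <> topM CL A B /\
  conceptB (phiB CL b (top CL)) <> botM CL A B.
Proof.
have [[a1 Ra1b] [a2 Ra2b]] := norm.2 b.
rewrite /conceptB up_phiB_top; split=> [/(f_equal snd) | /(f_equal snd)] /= Rb.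
- exact: Ra1b (congr1 (fun f => f a1) Rb).
- apply: (top_neq_bot Ra1b); rewrite -Ra2b.
  exact: esym (congr1 (fun f => f a2) Rb).
Qed.

Section Incidence.
Variables (a : A) (b : B).
Local Notation E := (conceptB (phiB CL b (R a b))).

Lemma incidence_concept_le_object : leM CL E (conceptA (phiA CL a (top CL))).
Proof.
apply: conceptB_leM; first exact: is_concept_conceptA.
rewrite /= down_phiA_top => b'; rewrite /phiB.
by case: excluded_middle_informative => /= [-> | _]; [apply: le_refl | apply: bot_le].
Qed.

Lemma incidence_concept_le_attribute : leM CL E (conceptB (phiB CL b (top CL))).
Proof.
apply: conceptB_leM; first exact: is_concept_conceptB.
move=> b'; apply: le_trans (le_down_up _ b'); rewrite /phiB.
by case: excluded_middle_informative => /= _; [apply: le_top | apply: le_refl].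
Qed.

Lemma incidence_concept_nontrivial :
  R a b <> bot CL -> E <> topM CL A B /\ E <> botM CL A B.
Proof.
move=> Rab; have [_ [b2 Rab2]] := norm.1 a.
split=> [Etop | Ebot].
- have := incidence_concept_le_object b2.
  rewrite Etop /= down_phiA_top Rab2 => top_le_bot.
  exact: top_neq_bot Rab (le_bot_eq top_le_bot).
- have Eb : E.1 b = bot CL by rewrite Ebot.
  apply: Rab; apply: le_bot_eq; rewrite -Eb.
  apply: le_trans (le_down_up _ b); rewrite /phiB.
  by case: excluded_middle_informative => /= [_ | /(_ erefl)]; first exact: le_refl.
Qed.

End Incidence.

End ConceptLattice.

Theorem lemma34 (L : Type) (CL : complete_lattice L) (n : nat)
    (conj sw nw : 'I_n -> L -> L -> L)
    (Hadj : forall i, adjoint_triple CL (conj i) (sw i) (nw i))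
    (Hunit : forall i x, conj i x (top CL) = x /\ conj i (top CL) x = x)
    (A B : Type) (HA : inhabited A) (HB : inhabited B)
    (R : A -> B -> L) (sigma : A -> B -> 'I_n)
    (Hnorm : normalized CL R)
    (Lam : Type) (K : Lam -> concept L A B -> Prop)
    (Hdec : decomposition CL sw nw R sigma K)
    (a : A) (b : B) (Hab : R a b <> bot CL) :
  exists mu, A_mu CL sw nw R sigma (K mu) a /\ B_mu CL sw nw R sigma (K mu) b.
Proof.
have [blocks [_ cover]] := Hdec.
pose E := conceptB CL sw nw R sigma (phiB CL b (R a b)).
have [mu KE] : exists mu, K mu E by apply/cover/is_concept_conceptB.
have [Etop Ebot] := incidence_concept_nontrivial Hadj sigma Hunit Hnorm Hab.
have [Atop Abot] := object_concept_nontrivial Hadj sigma Hunit Hnorm a.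
have [Btop Bbot] := attribute_concept_nontrivial Hadj sigma Hunit Hnorm b.
have KsE : Kstar CL (K mu) E by split.
exists mu; split; exists (top CL).
- apply: Kstar_leM (blocks mu) KsE (is_concept_conceptA Hadj R sigma _) _ Atop Abot.
  exact (incidence_concept_le_object Hadj R sigma Hunit a b).
- apply: Kstar_leM (blocks mu) KsE (is_concept_conceptB Hadj R sigma _) _ Btop Bbot.
  exact (incidence_concept_le_attribute Hadj R sigma a b).
Qed.
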